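(* Assume $F$ is $K$-smooth with $\ell\in\mathrm{int}(K)$ and strongly $K$-convex with $\mu\in\mathrm{int}(K)$, let $e\in\mathrm{int}(K)$, $\gamma\in(0,1)$, and let $\{x^k\}$ be generated by Algorithm 5, assumed not to terminate ($d^k\neq0$ for all $k$). Let $L_{\max}:=\max_{c^*\in C_e}\langle c^*,\ell\rangle$, $t_{\min}:=\min\{\gamma/L_{\max},1\}$, $\mu_{\min}:=\min_{c^*\in C_e}\langle c^*,\mu\rangle$. Then: (i) $\{x^k\}$ converges to an efficient solution $x^*$ of $\min_K F(x)$; (ii) $\|x^{k+1}-x^*\|\le\sqrt{1-t_{\min}\mu_{\min}}\,\|x^k-x^*\|$ for all $k\ge0$.
   Context: $K\subset\mathbb{R}^m$ closed convex pointed cone with nonempty interior; $y\preceq_K y'$ iff $y'-y\in K$. $K^*=\{c:\langle c,y\rangle\ge0\ \forall y\in K\}$; $C_e:=\{c^*\in K^*:\langle c^*,e\rangle=1\}$. $F:\mathbb{R}^n\to\mathbb{R}^m$ differentiable with Jacobian $JF$. Strongly $K$-convex with $\mu$: $JF(x)(y-x)+\tfrac12\|y-x\|^2\mu\preceq_K F(y)-F(x)$ $\forall x,y$; $K$-smooth with $\ell$: $F(y)-F(x)\preceq_K JF(x)(y-x)+\tfrac12\|y-x\|^2\ell$ $\forall x,y$. Efficient: no $x$ with $F(x)\preceq_K F(x^* )$, $F(x)\neq F(x^* )$. Algorithm 5: given $x^0$, for $k=0,1,\dots$: $d^k:=\arg\min_{d}\max_{c^*\in C_e}\langle c^*,JF(x^k)d\rangle+\tfrac12\|d\|^2$;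 if $d^k=0$ stop; otherwise $t_k:=\max\{\gamma^j:j\in\mathbb{N},\ F(x^k+\gamma^jd^k)-F(x^k)\preceq_K\gamma^j(JF(x^k)d^k+\tfrac12\|d^k\|^2e)\}$ and $x^{k+1}:=x^k+t_kd^k$. *)

From HB Require Import structures.
From mathcomp Require Import all_boot all_order all_algebra.
From mathcomp Require Import all_classical all_reals all_analysis.
Set Implicit Arguments. Unset Strict Implicit. Unset Printing Implicit Defensive.
Import Order.TTheory GRing.Theory Num.Theory.
Import numFieldNormedType.Exports.
Local Open Scope classical_set_scope.
Local Open Scope ring_scope.

Section Defs.
Variable R : realType.

Definition dotp (p : nat) (u v : 'rV[R]_p) : R := \sum_(i < p) u 0 i * v 0 i.
Definition enorm (p : nat) (u : 'rV[R]_p) : R := Num.sqrt (dotp u u).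

Definition is_cone (m : nat) (K : set 'rV[R]_m) : Prop :=
  forall (t : R) y, 0 <= t -> K y -> K (t *: y).
Definition is_convex (m : nat) (K : set 'rV[R]_m) : Prop :=
  forall (t : R) y z, 0 <= t <= 1 -> K y -> K z -> K (t *: y + (1 - t) *: z).
Definition is_pointed (m : nat) (K : set 'rV[R]_m) : Prop :=
  forall y, K y -> K (- y) -> y = 0.
Definition good_cone (m : nat) (K : set 'rV[R]_m) : Prop :=
  [/\ closed K, is_convex K, is_cone K, is_pointed K & exists z, interior K z].

Definition Kle (m : nat) (K : set 'rV[R]_m) (y y' : 'rV[R]_m) : Prop := K (y' - y).

Definition Kdual (m : nat) (K : set 'rV[R]_m) : set 'rV[R]_m :=
  [set c | forall y, K y -> 0 <= dotp c y].
Definition Ce (m : nat) (K : set 'rV[R]_m) (e : 'rV[R]_m) : set 'rV[R]_m :=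
  [set c | Kdual K c /\ dotp c e = 1].

Definition strongly_Kconvex (n m : nat) (K : set 'rV[R]_m)
  (F : 'rV[R]_n -> 'rV[R]_m) (mu : 'rV[R]_m) : Prop :=
  forall x y, Kle K ('d F x (y - x) + (2^-1 * enorm (y - x) ^+ 2) *: mu) (F y - F x).
Definition Ksmooth (n m : nat) (K : set 'rV[R]_m)
  (F : 'rV[R]_n -> 'rV[R]_m) (l : 'rV[R]_m) : Prop :=
  forall x y, Kle K (F y - F x) ('d F x (y - x) + (2^-1 * enorm (y - x) ^+ 2) *: l).

Definition efficient (n m : nat) (K : set 'rV[R]_m) (F : 'rV[R]_n -> 'rV[R]_m)
  (xs : 'rV[R]_n) : Prop :=
  ~ exists x, Kle K (F x) (F xs) /\ F x <> F xs.

(* objective of the direction subproblem: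
   max_{c in C_e} <c, JF(x) d> + 1/2 ||d||^2 (the max is written as a sup) *)
Definition dir_obj (n m : nat) (K : set 'rV[R]_m) (e : 'rV[R]_m)
  (F : 'rV[R]_n -> 'rV[R]_m) (x d : 'rV[R]_n) : R :=
  sup [set dotp c ('d F x d) | c in Ce K e] + 2^-1 * enorm d ^+ 2.

Definition ls_cond (n m : nat) (K : set 'rV[R]_m) (e : 'rV[R]_m)
  (F : 'rV[R]_n -> 'rV[R]_m) (x d : 'rV[R]_n) (s : R) : Prop :=
  Kle K (F (x + s *: d) - F x) (s *: ('d F x d + (2^-1 * enorm d ^+ 2) *: e)).

Definition alg5_run (n m : nat) (K : set 'rV[R]_m) (e : 'rV[R]_m) (gamma : R)
  (F : 'rV[R]_n -> 'rV[R]_m) (x d : nat -> 'rV[R]_n) (t : nat -> R) : Prop :=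
  forall k,
  [/\ (forall d', dir_obj K e F (x k) (d k) <= dir_obj K e F (x k) d'),
      d k <> 0,
      (exists j : nat, [/\ t k = gamma ^+ j,
                           ls_cond K e F (x k) (d k) (gamma ^+ j) &
                           forall j' : nat, ls_cond K e F (x k) (d k) (gamma ^+ j') ->
                                            gamma ^+ j' <= gamma ^+ j])
    & x k.+1 = x k + t k *: d k].

End Defs.

From HB Require Import structures.
From mathcomp Require Import all_boot all_order all_algebra.
From mathcomp Require Import all_classical all_reals all_analysis.
From mathcomp Require Import ring lra.
Import Order.TTheory GRing.Theory Num.Theory.
Import numFieldNormedType.Exports.
Local Open Scope classical_set_scope.
Local Open Scope ring_scope.
Set Implicit Arguments. Unset Strict Implicit. Unset Printing Implicit Defensive.

(* Write [sigma v] for the support function [sup_(c in C_e) <c, v>].  Since [e] is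
   interior, [C_e] is bounded, and a projection argument shows that [v] lies in [K]
   as soon as [<c, v> >= 0] for all [c] in [C_e]; this turns [K]-inequalities into
   scalar ones.  The direction [d] minimises a strongly convex function, hence
   [sigma (JF(x) d) <= sigma (JF(x) w) + <d, w - d>] for all [w].  Smoothness makes
   every step [s <= 1 / L_max] pass the Armijo test, so backtracking yields
   [t_k >= t_min].  Adding strong convexity between [x^k] and [y], the Armijo
   inequality and [F(y) <=_K F(x^(k+1))], and pairing with [C_e], gives
   [||x^(k+1) - y||^2 <= (1 - t_k mu_min) ||x^k - y||^2].  With [y = x^j] the iterates
   are Cauchy; their limit [xs] satisfies [F(xs) <=_K F(x^k)] for all [k] since [K] is
   closed, and any [y] with [F(y) <=_K F(xs)] is again a limit of the iterates, so
   [y = xs]. *)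

Section Dotp.
Variables (R : realType) (p : nat).
Implicit Types u v w : 'rV[R]_p.

Lemma dotpC u v : dotp u v = dotp v u.
Proof. by apply: eq_bigr => i _; rewrite mulrC. Qed.

Lemma dotpDl u v w : dotp (u + v) w = dotp u w + dotp v w.
Proof. by rewrite /dotp -big_split; apply: eq_bigr => i _; rewrite mxE mulrDl. Qed.

Lemma dotpDr u v w : dotp w (u + v) = dotp w u + dotp w v.
Proof. by rewrite dotpC dotpDl !(dotpC w). Qed.

Lemma dotpZl (a : R) u v : dotp (a *: u) v = a * dotp u v.
Proof. by rewrite /dotp mulr_sumr; apply: eq_bigr => i _; rewrite mxE mulrA. Qed.

Lemma dotpZr (a : R) u v : dotp u (a *: v) = a * dotp u v.
Proof. by rewrite dotpC dotpZl dotpC. Qed.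

Lemma dotpNl u v : dotp (- u) v = - dotp u v.
Proof. by rewrite -scaleN1r dotpZl mulN1r. Qed.

Lemma dotpNr u v : dotp u (- v) = - dotp u v.
Proof. by rewrite dotpC dotpNl dotpC. Qed.

Lemma dotpBl u v w : dotp (u - v) w = dotp u w - dotp v w.
Proof. by rewrite dotpDl dotpNl. Qed.

Lemma dotpBr u v w : dotp w (u - v) = dotp w u - dotp w v.
Proof. by rewrite dotpDr dotpNr. Qed.

Lemma dotp0l v : dotp 0 v = 0.
Proof. by rewrite -(scale0r 0) dotpZl mul0r. Qed.

Lemma dotp0r v : dotp v 0 = 0.
Proof. by rewrite dotpC dotp0l. Qed.

Lemma dotp_self_addZ u w (t : R) :
  dotp (u + t *: w) (u + t *: w) = dotp u u + 2 * t * dotp u w + t ^+ 2 * dotp w w.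
Proof. by rewrite !dotpDl !dotpDr !dotpZl !dotpZr (dotpC w u); ring. Qed.

Lemma dotp_self_ge0 v : 0 <= dotp v v.
Proof. by apply: sumr_ge0 => i _; rewrite -expr2 sqr_ge0. Qed.

Lemma dotp_self_eq0 v : (dotp v v == 0) = (v == 0).
Proof.
apply/idP/eqP => [|->]; last by rewrite dotp0l.
rewrite psumr_eq0 => [/allP v0|i _]; last by rewrite -expr2 sqr_ge0.
apply/rowP => j; rewrite mxE.
by have := v0 j (mem_index_enum _); rewrite /= -expr2 sqrf_eq0 => /eqP.
Qed.

Lemma dotp_self_gt0 v : v != 0 -> 0 < dotp v v.
Proof. by rewrite lt_def dotp_self_eq0 dotp_self_ge0 andbT. Qed.

Lemma sqr_enorm v : enorm v ^+ 2 = dotp v v.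
Proof. by rewrite /enorm sqr_sqrtr // dotp_self_ge0. Qed.

Lemma enorm_ge0 v : 0 <= enorm v.
Proof. exact: sqrtr_ge0. Qed.

Lemma enorm0 : enorm (0 : 'rV[R]_p) = 0.
Proof. by rewrite /enorm dotp0l sqrtr0. Qed.

Lemma enormN v : enorm (- v) = enorm v.
Proof. by rewrite /enorm dotpNl dotpNr opprK. Qed.

Lemma enormZ (a : R) v : enorm (a *: v) = `|a| * enorm v.
Proof. by rewrite /enorm dotpZl dotpZr mulrA -expr2 sqrtrM ?sqr_ge0 // sqrtr_sqr. Qed.

Lemma dotp_young (l : R) u v : 0 < l ->
  2 * dotp u v <= l * dotp u u + l^-1 * dotp v v.
Proof.
move=> l0; rewrite /dotp !mulr_sumr -big_split /=; apply: ler_sum => i _.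
rewrite -subr_ge0.
have -> : l * (u 0 i * u 0 i) + l^-1 * (v 0 i * v 0 i) - 2 * (u 0 i * v 0 i)
    = l^-1 * (l * u 0 i - v 0 i) ^+ 2 by field; rewrite gt_eqF.
by rewrite mulr_ge0 ?sqr_ge0 // invr_ge0 ltW.
Qed.

Lemma cauchy_schwarz u v : dotp u v <= enorm u * enorm v.
Proof.
have [->|u0] := eqVneq u 0; first by rewrite dotp0l enorm0 mul0r.
have [->|v0] := eqVneq v 0; first by rewrite dotp0r enorm0 mulr0.
have nu : 0 < enorm u by rewrite sqrtr_gt0 dotp_self_gt0.
have nv : 0 < enorm v by rewrite sqrtr_gt0 dotp_self_gt0.
rewrite -(ler_pM2l (ltr0Sn _ 1)); have := dotp_young u v (divr_gt0 nv nu).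
rewrite -!sqr_enorm invf_div => /le_trans; apply.
by rewrite le_eqVlt; apply/orP; left; apply/eqP; field; rewrite !gt_eqF.
Qed.

Lemma enormD_le u v : enorm (u + v) <= enorm u + enorm v.
Proof.
rewrite -(ler_pXn2r (_ : 0 < 2)%N) ?nnegrE ?addr_ge0 ?enorm_ge0 //.
rewrite sqr_enorm dotpDl !dotpDr (dotpC v u) -!sqr_enorm.
have := cauchy_schwarz u v; rewrite sqrrD; lra.
Qed.

Lemma normr_le_enorm v : `|v| <= enorm v.
Proof.
have -> : `|v| = mx_norm v by [].
rewrite mx_normrE.
apply: bigmax_le => [|[i j] _] /=; first exact: enorm_ge0.
rewrite -[`|v i j|]sqrtr_sqr /enorm ler_sqrt ?dotp_self_ge0 //.
rewrite /dotp (bigD1 j) //= -expr2 (ord1 i) lerDl.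
by apply: sumr_ge0 => k _; rewrite -expr2 sqr_ge0.
Qed.

Lemma dotp_dist_continuous a : continuous (fun y : 'rV[R]_p => dotp (y - a) (y - a)).
Proof.
move=> y; apply: (@cvg_big _ _ +%R 0 xpredT add_continuous) => [|i _].
  exact: nbhs_filter.
rewrite (_ : (fun z : 'rV[R]_p => (z - a) 0 i * (z - a) 0 i) =
  (fun z => (z 0 i - a 0 i) * (z 0 i - a 0 i))); last by apply: funext => z; rewrite !mxE.
rewrite !mxE.
have cvg_coord : (fun z : 'rV[R]_p => z 0 i - a 0 i) @ y --> y 0 i - a 0 i.
  exact: cvgB (@coord_continuous R 1 p 0 i y) (@cvg_cst _ (a 0 i) _ (nbhs y) _).
exact: (cvgM cvg_coord cvg_coord).
Qed.

Lemma enorm_continuous : continuous (@enorm R p).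
Proof.
move=> y; have dotp_cont : {for y, continuous (fun z : 'rV[R]_p => dotp z z)}.
  have := @dotp_dist_continuous 0 y.
  by rewrite (_ : (fun z => dotp (z - 0) (z - 0)) = fun z => dotp z z) ?subr0 //;
    apply: funext => z; rewrite subr0.
exact: (continuous_comp dotp_cont (@sqrt_continuous R _)).
Qed.

End Dotp.

Lemma le_of_le_addmul (R : realType) (a b k : R) :
  (forall t, 0 < t <= 1 -> a <= b + t * k) -> a <= b.
Proof.
move=> H; apply/ler_addgt0Pr => eps eps0.
have k1 : 0 < `|k| + 1 by rewrite ltr_wpDl.
set t := Num.min 1 (eps / (`|k| + 1)).
have t0 : 0 < t by rewrite lt_min ltr01 divr_gt0.
have t1 : t <= 1 by rewrite ge_min lexx.
have teps : t * (`|k| + 1) <= eps by rewrite -ler_pdivlMr // ge_min lexx orbT.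
apply: le_trans (H t (introT andP (conj t0 t1))) _; rewrite lerD2l.
have := ler_wpM2l (ltW t0) (ler_norm k); rewrite mulrDr mulr1 in teps; lra.
Qed.

Lemma compact_convex_proj (R : realType) (p : nat) (A : set 'rV[R]_p) z0 a :
  compact A -> is_convex A -> A z0 ->
  exists2 ys, A ys & forall z, A z -> 0 <= dotp (ys - a) (z - ys).
Proof.
move=> cA convA Az0.
have [ys /set_mem Ays ysmin] := EVT_min_rV (ex_intro _ z0 Az0) cA
  (continuous_subspaceT (dotp_dist_continuous (a := a))).
exists ys => // z Az.
rewrite -(pmulr_rge0 _ (ltr0Sn _ 1)).
apply: (le_of_le_addmul (k := dotp (z - ys) (z - ys))) => t /andP[t0 t1].
have Aw : A (ys + t *: (z - ys)).
  have -> : ys + t *: (z - ys) = t *: z + (1 - t) *: ys.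
    by rewrite scalerBr scalerBl scale1r addrCA addrA.
  by apply: convA => //; rewrite ltW.
have := ysmin _ (mem_set Aw).
rewrite (_ : ys + t *: (z - ys) - a = ys - a + t *: (z - ys)); last by rewrite addrAC.
rewrite dotp_self_addZ -subr_ge0 => h.
rewrite -(pmulr_rge0 _ t0); nra.
Qed.

Section Cone.
Variables (R : realType) (m : nat) (K : set 'rV[R]_m).
Hypothesis hK : good_cone K.

Lemma coneZ (t : R) y : 0 <= t -> K y -> K (t *: y).
Proof. by case: hK => _ _ coneK _ _; apply: coneK. Qed.

Lemma cone0 : K 0.
Proof. by case: hK => _ _ _ _ [z /interior_subset /(coneZ (lexx 0))]; rewrite scale0r. Qed.

Lemma coneD y z : K y -> K z -> K (y + z).
Proof.
case: hK => _ convK _ _ _ Ky Kz.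
have := convK 2^-1 (2 *: y) (2 *: z).
rewrite !scalerA (_ : 1 - 2^-1 = (2^-1 : R)); last by field.
rewrite mulVf ?pnatr_eq0 // !scale1r; apply; try exact: coneZ.
by rewrite invr_ge0 ler0n /= invf_le1 // ler1n.
Qed.

Lemma Kle_refl y : Kle K y y.
Proof. by rewrite /Kle subrr; exact: cone0. Qed.

Lemma Kle_trans y1 y2 y3 : Kle K y1 y2 -> Kle K y2 y3 -> Kle K y1 y3.
Proof. by rewrite /Kle => h12 h23; have := coneD h23 h12; rewrite addrA subrK. Qed.

Lemma Kle_cvg (u : nat -> 'rV[R]_m) a b :
  u @ \oo --> a -> (\forall j \near \oo, Kle K (u j) b) -> Kle K a b.
Proof.
move=> ua ub; have closedK : closed K by case: hK.
exact: (closed_cvg (u_ := fun j => b - u j) _ closedK ub _ (cvgB (cvg_cst b) ua)).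
Qed.

Lemma interior_ball z : interior K z ->
  exists2 eps : R, 0 < eps & forall v, `|v| < eps -> K (z - v).
Proof.
move=> /nbhs_ballP [eps eps0 zball]; exists eps => // v vlt.
by apply: zball; rewrite -ball_normE /ball_ /= opprB addrC subrK.
Qed.

(* Testing [c] against the points [z - s c] of a ball around [z] inside [K]. *)
Lemma Kdual_interior_ge z : interior K z ->
  exists2 eps : R, 0 < eps & forall c, Kdual K c -> eps * enorm c <= dotp c z.
Proof.
move=> intz; have [eps eps0 zball] := interior_ball intz.
exists (eps / 2) => [|c Kc]; first by rewrite divr_gt0.
have [c0|c0] := eqVneq c 0.
  by rewrite c0 enorm0 mulr0 dotp0l.
have nc : 0 < enorm c by rewrite sqrtr_gt0 dotp_self_gt0.
set s := eps / (2 * enorm c).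
have sc : s * enorm c = eps / 2 by rewrite /s; field; rewrite gt_eqF.
have : K (z - s *: c).
  apply: zball; apply: le_lt_trans (normr_le_enorm _) _.
  rewrite enormZ ger0_norm ?divr_ge0 ?mulr_ge0 ?enorm_ge0 ?ltW // sc.
  by rewrite ltr_pdivrMr // ltr_pMr // ltr1n.
by move=> /Kc; rewrite dotpBr dotpZr -sqr_enorm subr_ge0 expr2 mulrA sc.
Qed.

Lemma cone_convex_ball r : is_convex (K `&` [set y | enorm y <= r]).
Proof.
move=> t y z /andP[t0 t1] [Ky ny] [Kz nz]; split.
  by case: hK => _ convK _ _ _; apply: convK => //; apply/andP.
apply: le_trans (enormD_le _ _) _; rewrite !enormZ !ger0_norm ?subr_ge0 //=.
by have := ler_wpM2l t0 ny; have := ler_wpM2l (_ : 0 <= 1 - t) nz; lra.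
Qed.

Lemma cone_compact_ball r : compact (K `&` [set y | enorm y <= r]).
Proof.
apply: bounded_closed_compact.
  apply: filterS (nbhs_pinfty_ge (num_real r)) => s rs y [_ /= ny].
  exact: le_trans (normr_le_enorm y) (le_trans ny rs).
apply: closedI; first by case: hK.
have -> : [set y | enorm y <= r] = @enorm R m @^-1` [set s | s <= r] by [].
by apply: preimage_closed; [move=> y _; exact: enorm_continuous | exact: closed_le].
Qed.

(* Projection onto [K] truncated to a ball large enough to contain the nearest point. *)
Lemma cone_projection p : exists2 ys, K ys & Kdual K (ys - p) /\ dotp (ys - p) ys = 0.
Proof.
set r := 4 * enorm p + 1.
have r0 : 0 < r by rewrite ltr_wpDl ?mulr_ge0 ?enorm_ge0.
pose A := K `&` [set y | enorm y <= r].
have A0 : A 0 by split; [exact: cone0 | rewrite /= enorm0 ltW].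
have [ys [Kys ys_r] proj] :=
  compact_convex_proj p (cone_compact_ball (r := r)) (cone_convex_ball (r := r)) A0.
have cys_le0 : dotp (ys - p) ys <= 0.
  by have := proj _ A0; rewrite sub0r dotpNr oppr_ge0.
have ys_le_p : enorm ys <= enorm p.
  have := cauchy_schwarz p ys; move: cys_le0.
  rewrite dotpBl -sqr_enorm subr_le0.
  have := enorm_ge0 ys; have := enorm_ge0 p; nra.
have A2 : A (2 *: ys).
  split; first exact: coneZ.
  by rewrite /= enormZ ger0_norm // /r; have := enorm_ge0 p; lra.
have cys0 : dotp (ys - p) ys = 0.
  apply/eqP; rewrite eq_le cys_le0 /=.
  by have := proj _ A2; rewrite scalerDl scale1r addrK.
exists ys => //; split => // y Ky.
have ry : 0 < r + enorm y by have := enorm_ge0 y; lra.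
set lam := r / (r + enorm y).
have lam0 : 0 < lam by rewrite divr_gt0.
have Ay : A (lam *: y).
  split; first by apply: coneZ; rewrite ?ltW.
  rewrite /= enormZ gtr0_norm // /lam mulrAC ler_pdivrMr //.
  by rewrite ler_pM2l // lerDr ltW.
by have := proj _ Ay; rewrite dotpBr cys0 subr0 dotpZr pmulr_rge0.
Qed.

End Cone.

Section Ce.
Variables (R : realType) (m : nat) (K : set 'rV[R]_m) (e : 'rV[R]_m).
Hypotheses (hK : good_cone K) (he : interior K e).

Lemma Ce_enorm_le : exists2 B : R, 0 < B & forall c, Ce K e c -> enorm c <= B.
Proof.
have [eps eps0 epsc] := Kdual_interior_ge he.
exists eps^-1 => [|c [Kc ce]]; first by rewrite invr_gt0.
by rewrite -(ler_pM2l eps0) mulfV ?gt_eqF // -ce epsc.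
Qed.

Lemma Ce_interior_ge z : interior K z ->
  exists2 del : R, 0 < del & forall c, Ce K e c -> del <= dotp c z.
Proof.
move=> intz; have [eps eps0 epsc] := Kdual_interior_ge intz.
have e1 : 0 < enorm e + 1 by rewrite ltr_wpDl ?enorm_ge0.
exists (eps / (enorm e + 1)) => [|c [Kc ce]]; first by rewrite divr_gt0.
apply: le_trans (epsc _ Kc); rewrite ler_pdivrMr // -mulrA ler_peMr ?ltW //.
have := cauchy_schwarz c e; rewrite ce.
by have := enorm_ge0 c; have := enorm_ge0 e; nra.
Qed.

Lemma Ce_ge0_cone y : (forall c, Ce K e c -> 0 <= dotp c y) -> K y.
Proof.
move=> Cy; have [ys Kys [Kc cys]] := cone_projection hK y.
have [c0|c0] := eqVneq (ys - y) 0; first by move/eqP: c0; rewrite subr_eq0 => /eqP <-.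
have [eps eps0 epsc] := Kdual_interior_ge he.
have ce : 0 < dotp (ys - y) e.
  by apply: lt_le_trans (epsc _ Kc); rewrite mulr_gt0 // sqrtr_gt0 dotp_self_gt0.
have Cc : Ce K e ((dotp (ys - y) e)^-1 *: (ys - y)).
  split; last by rewrite dotpZl mulVf ?gt_eqF.
  by move=> v Kv; rewrite dotpZl mulr_ge0 ?Kc // invr_ge0 ltW.
have := Cy _ Cc; rewrite dotpZl pmulr_rge0 ?invr_gt0 //.
have -> : dotp (ys - y) y = - dotp (ys - y) (ys - y).
  by rewrite [in RHS]dotpBr cys sub0r opprK.
by rewrite oppr_ge0 leNgt dotp_self_gt0.
Qed.

End Ce.

Section Support.
Variables (R : realType) (m : nat) (K : set 'rV[R]_m) (e : 'rV[R]_m).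
Hypotheses (he : interior K e) (hCe : Ce K e !=set0).

Local Notation sigma v := (sup [set dotp c v | c in Ce K e]).

Lemma sigma_has v : has_sup [set dotp c v | c in Ce K e].
Proof.
split; first by case: hCe => c hc; exists (dotp c v), c.
have [B B0 cB] := Ce_enorm_le he.
exists (B * enorm v) => _ [c hc <-].
exact: le_trans (cauchy_schwarz c v) (ler_wpM2r (enorm_ge0 v) (cB c hc)).
Qed.

Lemma sigma_ub c v : Ce K e c -> dotp c v <= sigma v.
Proof. by move=> hc; apply: sup_upper_bound (sigma_has v) _ _; exists c. Qed.

Lemma sigma_le v (a : R) : (forall c, Ce K e c -> dotp c v <= a) -> sigma v <= a.
Proof.
move=> va; apply: ge_sup; first by case: hCe => c hc; exists (dotp c v), c.
by move=> _ [c hc <-]; apply: va.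
Qed.

Lemma sigma_conv (a b : R) u v : 0 <= a -> 0 <= b ->
  sigma (a *: u + b *: v) <= a * sigma u + b * sigma v.
Proof.
move=> a0 b0; apply: sigma_le => c hc.
by rewrite dotpDr !dotpZr lerD // ler_wpM2l // sigma_ub.
Qed.

Lemma sigma_add u v : sigma (u + v) <= sigma u + sigma v.
Proof. by have := sigma_conv u v ler01 ler01; rewrite !scale1r !mul1r. Qed.

Lemma inf_Ce_le mu c : K mu -> Ce K e c -> inf [set dotp c mu | c in Ce K e] <= dotp c mu.
Proof.
move=> Kmu hc; apply: ge_inf; last by exists c.
by exists 0 => _ [c' [Kc' _] <-]; apply: Kc'.
Qed.

Lemma inf_Ce_gt0 mu : interior K mu -> 0 < inf [set dotp c mu | c in Ce K e].
Proof.
move=> intmu; have [del del0 delc] := Ce_interior_ge e intmu.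
apply: lt_le_trans del0 _; apply: lb_le_inf.
  by case: hCe => c hc; exists (dotp c mu), c.
by move=> _ [c hc <-]; apply: delc.
Qed.

Lemma sup_Ce_gt0 l : interior K l -> 0 < sigma l.
Proof.
move=> intl; have [del del0 delc] := Ce_interior_ge e intl.
by case: hCe => c hc; apply: lt_le_trans del0 (le_trans (delc c hc) (sigma_ub l hc)).
Qed.

End Support.

(* If [C_e] were empty, [sup set0 = 0] would make the objective [||d||^2 / 2],
   which is minimised only at [0]. *)
Lemma dir_min_Ce_neq0 (R : realType) (n m : nat) (K : set 'rV[R]_m) (e : 'rV[R]_m)
    (F : 'rV[R]_n -> 'rV[R]_m) (x dx : 'rV[R]_n) :
  (forall d', dir_obj K e F x dx <= dir_obj K e F x d') -> dx != 0 -> Ce K e !=set0.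
Proof.
move=> dmin dx0; have [//|Ce0] := pselect (Ce K e !=set0); exfalso.
have E v : [set dotp c v | c in Ce K e] = set0.
  by apply/seteqP; split => // y [c hc _]; apply: Ce0; exists c.
have := dmin 0; rewrite /dir_obj !E sup0 !add0r enorm0 expr0n mulr0 sqr_enorm.
by rewrite pmulr_rle0 ?invr_gt0 // leNgt dotp_self_gt0.
Qed.

Section Step.
Variables (R : realType) (n m : nat) (K : set 'rV[R]_m) (e : 'rV[R]_m).
Variables (F : 'rV[R]_n -> 'rV[R]_m) (x dx : 'rV[R]_n).
Hypotheses (hK : good_cone K) (he : interior K e) (hCe : Ce K e !=set0).
Hypothesis dmin : forall d', dir_obj K e F x dx <= dir_obj K e F x d'.

Local Notation sigma v := (sup [set dotp c v | c in Ce K e]).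
Local Notation J := ('d F x).

Lemma dir_opt w : sigma (J dx) <= sigma (J w) + dotp dx (w - dx).
Proof.
apply: (le_of_le_addmul (k := 2^-1 * dotp (w - dx) (w - dx))) => s /andP[s0 s1].
have := dmin (dx + s *: (w - dx)); rewrite /dir_obj.
have -> : J (dx + s *: (w - dx)) = (1 - s) *: J dx + s *: J w.
  by rewrite linearD linearZ linearB /=; apply/rowP => i; rewrite !mxE; ring.
rewrite !sqr_enorm dotp_self_addZ => h.
have s1' : 0 <= 1 - s by rewrite subr_ge0.
rewrite -(ler_pM2l s0).
by have := sigma_conv he hCe (J dx) (J w) s1' (ltW s0); lra.
Qed.

Lemma dir_opt_dotp w : - dotp dx w <= sigma (J w).
Proof.
have := dir_opt (dx + w); rewrite linearD addrAC subrr add0r.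
by have := sigma_add he hCe (J dx) (J w); lra.
Qed.

Lemma dir_descent : sigma (J dx) <= - dotp dx dx.
Proof.
have := dir_opt 0; rewrite linear0 sub0r dotpNr.
have : sigma 0 <= 0 by apply: (sigma_le hCe) => c _; rewrite dotp0r.
lra.
Qed.

Lemma dir_descent_cone : K (- (J dx + (2^-1 * enorm dx ^+ 2) *: e)).
Proof.
apply: (Ce_ge0_cone hK he) => c hc.
rewrite dotpNr dotpDr dotpZr (proj2 hc) mulr1 oppr_ge0 sqr_enorm.
by have := sigma_ub he hCe (J dx) hc; have := dir_descent; have := dotp_self_ge0 dx; lra.
Qed.

Lemma ls_cond_Kle s : 0 <= s -> ls_cond K e F x dx s -> Kle K (F (x + s *: dx)) (F x).
Proof.
rewrite /ls_cond /Kle => s0 ls.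
have := coneD hK ls (coneZ hK s0 dir_descent_cone).
by rewrite scalerN addrAC subrr add0r opprB.
Qed.

Lemma ls_cond_small l s : Ksmooth K F l -> 0 <= s -> s * sigma l <= 1 ->
  ls_cond K e F x dx s.
Proof.
rewrite /ls_cond => hsm s0 sl.
have := hsm x (x + s *: dx); rewrite addrAC subrr add0r linearZ /= enormZ ger0_norm //.
move/(Kle_trans hK); apply; rewrite /Kle.
have -> : s *: (J dx + (2^-1 * enorm dx ^+ 2) *: e) -
    (s *: J dx + (2^-1 * (s * enorm dx) ^+ 2) *: l) =
    (s * (2^-1 * enorm dx ^+ 2)) *: (e - s *: l).
  by apply/rowP => i; rewrite !mxE; ring.
apply: (coneZ hK); first by apply: mulr_ge0 => //; apply: mulr_ge0; rewrite ?sqr_ge0.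
apply: (Ce_ge0_cone hK he) => c hc.
rewrite dotpBr dotpZr (proj2 hc) subr_ge0.
exact: le_trans (ler_wpM2l s0 (sigma_ub he hCe l hc)) sl.
Qed.

Section Contraction.
Variables (mu : 'rV[R]_m) (s : R) (y : 'rV[R]_n).
Hypotheses (Kmu : K mu) (hsc : strongly_Kconvex K F mu).
Hypotheses (s0 : 0 <= s) (ls : ls_cond K e F x dx s) (Fy : Kle K (F y) (F (x + s *: dx))).

Local Notation mumin := (inf [set dotp c mu | c in Ce K e]).

(* Add up the three [K]-inequalities: strong convexity between [x] and [y], [Fy]
   and the Armijo condition [ls]. *)
Lemma sigma_secant_le :
  sigma (J (y - x)) <=
  s * (sigma (J dx) + 2^-1 * enorm dx ^+ 2) - 2^-1 * enorm (y - x) ^+ 2 * mumin.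
Proof.
apply: (sigma_le hCe) => c hc.
have := proj1 hc _ (coneD hK (coneD hK (hsc x y) Fy) ls).
rewrite !(dotpDr, dotpNr, dotpZr) (proj2 hc) mulr1.
have a0 : 0 <= 2^-1 * enorm (y - x) ^+ 2 by rewrite mulr_ge0 ?sqr_ge0.
have := ler_wpM2l s0 (sigma_ub he hCe (J dx) hc).
by have := ler_wpM2l a0 (inf_Ce_le Kmu hc); lra.
Qed.

Lemma contraction_step :
  dotp (x + s *: dx - y) (x + s *: dx - y) <= (1 - s * mumin) * dotp (x - y) (x - y).
Proof.
rewrite addrAC dotp_self_addZ.
have := sigma_secant_le; have := dir_opt_dotp (y - x); have := dir_descent.
rewrite !sqr_enorm -[y - x]opprB dotpNr dotpNl dotpNr opprK (dotpC dx) => h1 h2 h3.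
have := ler_wpM2l s0 (le_trans h2 h3); have := ler_wpM2l s0 h1; nra.
Qed.

End Contraction.

End Step.

Lemma backtrack_ge (R : realType) (gamma L : R) (P : R -> Prop) (j : nat) :
  0 < gamma < 1 -> 0 < L -> (forall s, 0 <= s -> s * L <= 1 -> P s) ->
  (forall j' : nat, P (gamma ^+ j') -> gamma ^+ j' <= gamma ^+ j) ->
  Num.min (gamma / L) 1 <= gamma ^+ j.
Proof.
case/andP => g0 g1 L0 Psmall jmax.
have small : exists k : nat, gamma ^+ k * L <= 1.
  have g_1 : `|gamma| < 1 by rewrite ger0_norm // ltW.
  have Li : 0 < L^-1 by rewrite invr_gt0.
  have [N _ gN] := cvgr_lt 0 (cvg_expr g_1) _ Li.
  by exists N; rewrite -ler_pdivlMr // mul1r ltW //; apply: (gN N) => /=.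
have [j0 j0L j0min] := ex_minnP small.
apply: le_trans (jmax j0 (Psmall _ (exprn_ge0 _ (ltW g0)) j0L)).
case: j0 j0L j0min => [|j1] _ j0min; first by rewrite expr0 ge_min lexx orbT.
have : 1 < gamma ^+ j1 * L by rewrite ltNge; apply/negP => /j0min; rewrite ltnn.
by rewrite ge_min ler_pdivrMr // exprS -mulrA ler_pMr // => /ltW ->.
Qed.

Lemma ler_sqrt_mul (R : realType) (a b r : R) : 0 <= a -> 0 <= b ->
  a ^+ 2 <= r * b ^+ 2 -> a <= Num.sqrt r * b.
Proof.
move=> a0 b0 ab; have [r0|r0] := ltrP r 0.
  rewrite ltr0_sqrtr // mul0r.
  by have := mulr_ge0 b0 b0; rewrite -expr2; nra.
rewrite -[a]ger0_norm // -sqrtr_sqr -[b]ger0_norm // -sqrtr_sqr -sqrtrM //.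
by rewrite ler_sqrt // mulr_ge0 // sqr_ge0.
Qed.

Lemma geometric_lt (R : realType) (q C eps : R) : 0 <= q < 1 -> 0 <= C -> 0 < eps ->
  \forall k \near \oo, q ^+ k * C < eps.
Proof.
case/andP => q0 q1 C0 eps0.
have q_1 : `|q| < 1 by rewrite ger0_norm.
have C1 : 0 < C + 1 by rewrite ltr_wpDl.
apply: filterS (cvgr_lt 0 (cvg_expr q_1) _ (divr_gt0 eps0 C1)) => k.
rewrite ltr_pdivlMr // => /(le_lt_trans _); apply.
by rewrite ler_wpM2l ?exprn_ge0 // lerDl.
Qed.

Lemma cvg_geometric (R : realType) (p : nat) (u : nat -> 'rV[R]_p) a (q C : R) :
  0 <= q < 1 -> 0 <= C -> (forall k, enorm (u k - a) <= q ^+ k * C) -> u @ \oo --> a.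
Proof.
move=> q01 C0 uq; apply/cvgrPdist_lt => eps eps0.
apply: filterS (geometric_lt q01 C0 eps0) => k.
apply: le_lt_trans; apply: le_trans (normr_le_enorm _) _.
by rewrite -opprB enormN.
Qed.

Lemma cauchy_geometric (R : realType) (p : nat) (u : nat -> 'rV[R]_p) (q B : R) :
  0 <= q < 1 -> 0 <= B ->
  (forall k j, (k <= j)%N -> enorm (u k - u j) <= q ^+ k * B) -> cvg (u @ \oo).
Proof.
move=> q01 B0 uq; apply: cauchy_cvg; apply: cauchy_exP => eps eps0.
have [N _ qN] := geometric_lt q01 B0 eps0.
exists (u N), N => // k /= Nk.
rewrite -ball_normE /ball_ /=; apply: le_lt_trans (normr_le_enorm _) _.
exact: le_lt_trans (uq _ _ Nk) (qN N (leqnn N)).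
Qed.

Section Iterates.
Variables (R : realType) (n m : nat) (K : set 'rV[R]_m) (F : 'rV[R]_n -> 'rV[R]_m).
Variables (l mu e : 'rV[R]_m) (gamma : R) (x d : nat -> 'rV[R]_n) (t : nat -> R).
Hypotheses (hK : good_cone K) (hl : interior K l) (hsm : Ksmooth K F l).
Hypotheses (hmu : interior K mu) (hsc : strongly_Kconvex K F mu).
Hypotheses (he : interior K e) (hg : 0 < gamma < 1) (hrun : alg5_run K e gamma F x d t).

Local Notation sigma v := (sup [set dotp c v | c in Ce K e]).
Local Notation tmin := (Num.min (gamma / sigma l) 1).
Local Notation mumin := (inf [set dotp c mu | c in Ce K e]).
Local Notation q := (Num.sqrt (1 - tmin * mumin)).

Lemma iter_Ce_neq0 : Ce K e !=set0.
Proof. by have [dmin d0 _ _] := hrun 0; apply: dir_min_Ce_neq0 dmin _; apply/eqP. Qed.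

Lemma tmin_gt0 : 0 < tmin.
Proof.
case/andP: hg => g0 _.
by rewrite lt_min ltr01 andbT divr_gt0 // (sup_Ce_gt0 he iter_Ce_neq0 hl).
Qed.

Lemma tmin_le_step k : tmin <= t k.
Proof.
have [_ _ [j [-> _ jmax]] _] := hrun k.
apply: backtrack_ge hg (sup_Ce_gt0 he iter_Ce_neq0 hl) _ jmax => s s0 sl.
exact: (ls_cond_small (x k) (d k) hK he iter_Ce_neq0 hsm s0 sl).
Qed.

Lemma step_ge0 k : 0 <= t k.
Proof. exact: le_trans (ltW tmin_gt0) (tmin_le_step k). Qed.

Lemma Kle_iter_succ k : Kle K (F (x k.+1)) (F (x k)).
Proof.
have [dmin _ [j [tj ls _]] ->] := hrun k; rewrite -tj in ls.
exact: (ls_cond_Kle hK he iter_Ce_neq0 dmin (step_ge0 k) ls).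
Qed.

Lemma Kle_iter k j : (k <= j)%N -> Kle K (F (x j)) (F (x k)).
Proof.
elim: j => [|j IH]; first by rewrite leqn0 => /eqP ->; exact: Kle_refl.
rewrite leq_eqVlt ltnS => /orP[/eqP ->|kj]; first exact: Kle_refl.
exact: (Kle_trans hK (Kle_iter_succ j) (IH kj)).
Qed.

Lemma contraction_iter k y : Kle K (F y) (F (x k.+1)) ->
  enorm (x k.+1 - y) <= q * enorm (x k - y).
Proof.
have [dmin _ [j [tj ls _]] ->] := hrun k; rewrite -tj in ls.
move=> Fy; apply: ler_sqrt_mul; rewrite ?enorm_ge0 // !sqr_enorm.
apply: le_trans (contraction_step hK he iter_Ce_neq0 dmin (interior_subset hmu) hsc
  (step_ge0 k) ls Fy) _.
rewrite ler_wpM2r ?dotp_self_ge0 // lerD2l lerN2 ler_wpM2r ?tmin_le_step //.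
exact: ltW (inf_Ce_gt0 iter_Ce_neq0 hmu).
Qed.

Lemma contraction_factor : 0 <= q < 1.
Proof.
rewrite sqrtr_ge0 /=; have := mulr_gt0 tmin_gt0 (inf_Ce_gt0 iter_Ce_neq0 hmu).
have [r0|r0] := ltrP (1 - tmin * mumin) 0; first by rewrite ltr0_sqrtr.
by move=> tm0; rewrite -[X in _ < X]sqrtr1 ltr_sqrt //; lra.
Qed.

Lemma dist_iter_geometric y k : Kle K (F y) (F (x k)) ->
  enorm (x k - y) <= q ^+ k * enorm (x 0 - y).
Proof.
elim: k => [|k IH] Fy; first by rewrite expr0 mul1r.
apply: le_trans (contraction_iter Fy) _; rewrite exprS -mulrA.
apply: ler_wpM2l; first by case/andP: contraction_factor.
exact: IH (Kle_trans hK Fy (Kle_iter_succ k)).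
Qed.

Lemma iter_cvg_to y : (forall k, Kle K (F y) (F (x k))) -> x @ \oo --> y.
Proof.
move=> Fy; apply: cvg_geometric contraction_factor (enorm_ge0 (x 0 - y)) _ => k.
exact: dist_iter_geometric.
Qed.

(* The bound on [x_0 - x_j] comes from one contraction step towards [x_j]. *)
Lemma iter_cvg : cvg (x @ \oo).
Proof.
have /andP[q0 q1] := contraction_factor.
set B := enorm (x 0 - x 1) / (1 - q).
have B0 : 0 <= B by rewrite divr_ge0 ?enorm_ge0 // subr_ge0 ltW.
apply: cauchy_geometric contraction_factor B0 _ => k j kj.
apply: le_trans (dist_iter_geometric (Kle_iter kj)) _.
rewrite ler_wpM2l ?exprn_ge0 // /B ler_pdivlMr ?subr_gt0 //.
case: j {kj} => [|j]; first by rewrite subrr enorm0 mul0r enorm_ge0.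
have := contraction_iter (Kle_iter (isT : (1 <= j.+1)%N)).
have := enormD_le (x 0 - x 1) (x 1 - x j.+1); rewrite addrA subrK; lra.
Qed.

Lemma Kle_lim_iter : (forall z, differentiable F z) ->
  forall k, Kle K (F (lim (x @ \oo))) (F (x k)).
Proof.
move=> hdiff k; apply: (Kle_cvg hK (u := F \o x)).
  exact: continuous_cvg (differentiable_continuous (hdiff _)) iter_cvg.
by exists k => // j /= kj; apply: Kle_iter.
Qed.

End Iterates.

Unset Implicit Arguments.

Theorem lemma5p1 (R : realType) (n m : nat) (K : set 'rV[R]_m)
  (F : 'rV[R]_n -> 'rV[R]_m) (l mu e : 'rV[R]_m) (gamma : R)
  (x d : nat -> 'rV[R]_n) (t : nat -> R) :
  good_cone K ->
  (forall z, differentiable F z) ->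
  interior K l -> Ksmooth K F l ->
  interior K mu -> strongly_Kconvex K F mu ->
  interior K e ->
  0 < gamma < 1 ->
  alg5_run K e gamma F x d t ->
  let Lmax := sup [set dotp c l | c in Ce K e] in
  let tmin := Num.min (gamma / Lmax) 1 in
  let mumin := inf [set dotp c mu | c in Ce K e] in
  exists xs : 'rV[R]_n,
    [/\ x @ \oo --> xs,
        efficient K F xs &
        forall k : nat, enorm (x k.+1 - xs) <= Num.sqrt (1 - tmin * mumin) * enorm (x k - xs)].
Proof.
move=> hK hdiff hl hsm hmu hsc he hg hrun Lmax tmin mumin.
have xcvg := iter_cvg hK hl hsm hmu hsc he hg hrun.
have Fxs := Kle_lim_iter hK hl hsm hmu hsc he hg hrun hdiff.
exists (lim (x @ \oo)); split => // [[z [Fz Fz_neq]]|k].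
- have zcvg := iter_cvg_to hK hl hsm hmu hsc he hg hrun (fun k => Kle_trans hK Fz (Fxs k)).
  by apply: Fz_neq; rewrite (cvg_unique _ zcvg xcvg).
- exact: contraction_iter hK hl hsm hmu hsc he hg hrun k _ (Fxs k.+1).
Qed.
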